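(* Let $G=(V,E,w_G)$ be a directed graph with non-negative integer edge weights, $n=|V|$, $s\in V$, and $1\le h\le n$ an integer. Let $C\subseteq V$ contain $s$ and, for every pair of nodes $u,v$ for which the shortest path from $u$ to $v$ in $G$ consists of exactly $\lceil h/2\rceil$ nodes, at least one node of one of these shortest paths. For each $x\in C$ let $\tilde d(x,\cdot)$ satisfy $\mathrm{dist}_G(x,v)\le \tilde d(x,v)\le 2\,\mathrm{dist}^h_G(x,v)$ for all $v\in V$. Let $H=(C,C^2,w_H)$ with $w_H(x,y)=\tilde d(x,y)$. Let $G'=(V,E\cup(\{s\}\times C),w_{G'})$ where $w_{G'}(u,v)=\mathrm{dist}_H(u,v)$ for $(u,v)\in(\{s\}\times C)\setminus E$, $w_{G'}(u,v)=2w_G(u,v)$ for $(u,v)\in E\setminus(\{s\}\times C)$, and $w_{G'}(u,v)=\min(\mathrm{dist}_H(u,v),2w_G(u,v))$ for $(u,v)\in E\cap(\{s\}\times C)$. Then for every node $v\in V$, $\mathrm{dist}_G(s,v)\le \mathrm{dist}_{G'}(s,v)\le 2\,\mathrm{dist}_G(s,v)$.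
   Context: For a weighted directed graph, $\mathrm{dist}(u,v)$ denotes the minimum weight of a directed path from $u$ to $v$. For an integer $h\ge1$, the $h$-hop distance $\mathrm{dist}^h(u,v)$ is the minimum weight among all directed paths from $u$ to $v$ with at most $h$ edges. *)

From mathcomp Require Import all_boot.
From mathcomp Require Import boolp.

Set Implicit Arguments.
Unset Strict Implicit.
Unset Printing Implicit Defensive.

(* Extended naturals N ∪ {+oo}: [Some k] is k, [None] is +oo. *)
Definition oleq (a b : option nat) : bool :=
  match b with
  | None => true
  | Some b' => match a with Some a' => (a' <= b')%N | None => false end
  end.

Definition odbl (a : option nat) : option nat := omap (fun k => 2 * k)%N a.

Definition omin (a b : option nat) : option nat :=
  match a, b with
  | None, _ => b
  | _, None => a
  | Some x, Some y => Some (minn x y)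
  end.

Lemma oinf_ex (Q : nat -> Prop) : (exists k, Q k) -> exists k, `[< Q k >].
Proof. by case=> k Hk; exists k; apply/asboolP. Qed.

Definition oinf (Q : nat -> Prop) : option nat :=
  match pselect (exists k, Q k) with
  | left H => Some (ex_minn (oinf_ex H))
  | right _ => None
  end.

Section Graphs.
Variable T : finType.

(* A weighted directed graph on T: [w u v = Some c] means the edge (u,v)
   is present with weight c; [w u v = None] means there is no edge
   (equivalently, an edge of weight +oo). *)
Definition wgraph := T -> T -> option nat.

(* Weight of the walk u :: p (its edges are consecutive pairs);
   None if some consecutive pair is not an edge. *)
Fixpoint wwt (w : wgraph) (u : T) (p : seq T) : option nat :=
  match p with
  | [::] => Some 0
  | v :: p' => obind (fun a => omap (addn a) (wwt w v p')) (w u v)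
  end.

Definition dist (w : wgraph) (u v : T) : option nat :=
  oinf (fun k => exists p : seq T, last u p = v /\ wwt w u p = Some k).

Definition hdist (w : wgraph) (h : nat) (u v : T) : option nat :=
  oinf (fun k => exists p : seq T,
          (size p <= h)%N /\ last u p = v /\ wwt w u p = Some k).

Definition shortest_path (w : wgraph) (u v : T) (p : seq T) : Prop :=
  uniq (u :: p) /\ last u p = v /\
  exists k, wwt w u p = Some k /\ dist w u v = Some k.

End Graphs.

Definition graph_of (T : finType) (E : rel T) (wG : T -> T -> nat) : wgraph T :=
  fun u v => if E u v then Some (wG u v) else None.

(* H = (C, C^2, w_H) with w_H(x,y) = dt x y, represented on the vertex type
   T with all edges touching a vertex outside C removed. *)
Definition graph_H (T : finType) (C : {set T}) (dt : T -> T -> option nat)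
  : wgraph T :=
  fun x y => if (x \in C) && (y \in C) then dt x y else None.

Definition graph_G' (T : finType) (E : rel T) (wG : T -> T -> nat)
  (C : {set T}) (dt : T -> T -> option nat) (s : T) : wgraph T :=
  fun u v =>
    if (u == s) && (v \in C) then
      (if E u v then omin (dist (graph_H C dt) u v) (Some (2 * wG u v)%N)
       else dist (graph_H C dt) u v)
    else if E u v then Some (2 * wG u v)%N else None.

(* Both bounds are comparisons of graphs edge by edge.  Every edge of G' has
   weight at least the G-distance between its endpoints, because the weights
   of H (hence H-distances) dominate G-distances; so G'-walks never beat
   G-distances.  Conversely G' contains every edge of G at no more than twice
   its weight, so G'-distances are at most twice G-distances. *)
From mathcomp Require Import all_boot.
From mathcomp Require Import boolp.

Set Implicit Arguments.
Unset Strict Implicit.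
Unset Printing Implicit Defensive.

Lemma oleq_trans : transitive oleq.
Proof. by move=> [b|] [a|] [c|] //=; apply: leq_trans. Qed.

Section Walks.
Variable T : finType.
Implicit Types (w : wgraph T) (u v x y : T) (p q : seq T).

Definition walk_le w u v k : Prop :=
  exists p, last u p = v /\ exists2 k', wwt w u p = Some k' & (k' <= k)%N.

Lemma wwt_cat w u p q a b :
  wwt w u p = Some a -> wwt w (last u p) q = Some b ->
  wwt w u (p ++ q) = Some (a + b).
Proof.
elim: p u a => [|x p IH] u a /=; first by case=> <-.
case: (w u x) => [c|] //=; case Hp: (wwt w x p) => [d|] //= [<-] Hq.
by rewrite (IH x d Hp Hq) /= addnA.
Qed.

Lemma walk_le_nil w u : walk_le w u u 0.
Proof. by exists [::]; split => //; exists 0. Qed.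

Lemma walk_le_edge w x y c : w x y = Some c -> walk_le w x y c.
Proof. by move=> Hxy; exists [:: y]; split => //; exists c => //; rewrite /= Hxy /= addn0. Qed.

Lemma walk_le_mono w u v a b : (a <= b)%N -> walk_le w u v a -> walk_le w u v b.
Proof.
move=> Hab [p [Hl [k Hw Hk]]]; exists p; split => //.
by exists k => //; apply: leq_trans Hab.
Qed.

Lemma walk_le_cat w u x v a b :
  walk_le w u x a -> walk_le w x v b -> walk_le w u v (a + b).
Proof.
move=> [p [<- [k Hp Hk]]] [q [<- [k' Hq Hk']]].
exists (p ++ q); split; first by rewrite last_cat.
by exists (k + k'); [apply: wwt_cat | apply: leq_add].
Qed.

Lemma dist_leP w u v k : oleq (dist w u v) (Some k) <-> walk_le w u v k.
Proof.
rewrite /dist /oinf; case: pselect => [Hex|Hex]; last first.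
  by split=> // [[p [Hl [k' Hw _]]]]; case: Hex; exists k', p.
case: ex_minnP => m /asboolP [p [Hl Hw]] Hmin /=; split=> [Hm|].
  by exists p; split => //; exists m.
case=> q [Hl' [k' Hw' Hk']]; apply: leq_trans Hk'.
by apply: Hmin; apply/asboolP; exists q.
Qed.

Lemma dist_le_of_edges w w' :
  (forall x y c, w' x y = Some c -> oleq (dist w x y) (Some c)) ->
  forall u v, oleq (dist w u v) (dist w' u v).
Proof.
move=> Hedge u v; case Hd: (dist w' u v) => [k|]; last by case: (dist w u v).
have /dist_leP [p [<- [k' Hp Hk']]] : oleq (dist w' u v) (Some k) by rewrite Hd /=.
apply/dist_leP/(walk_le_mono Hk'); elim: p u k' Hp {Hd Hk'} => [|x p IH] u k' /=.
  by case=> <-; apply: walk_le_nil.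
case Hux: (w' u x) => [c|] //=; case Hp: (wwt w' x p) => [d|] //= [<-].
by apply: walk_le_cat (IH _ _ Hp); apply/dist_leP/Hedge.
Qed.

Lemma dist_le_scale w w' a :
  (forall x y c, w x y = Some c -> exists2 c', w' x y = Some c' & (c' <= a * c)%N) ->
  forall u v, oleq (dist w' u v) (omap (muln a) (dist w u v)).
Proof.
move=> Hedge u v; case Hd: (dist w u v) => [k|] /=; last by case: (dist w' u v).
have /dist_leP [p [<- [k' Hp Hk']]] : oleq (dist w u v) (Some k) by rewrite Hd /=.
apply/dist_leP/(walk_le_mono (leq_mul (leqnn a) Hk')).
elim: p u k' Hp {Hd Hk'} => [|x p IH] u k' /=.
  by case=> <-; rewrite muln0; apply: walk_le_nil.
case Hux: (w u x) => [c|] //=; case Hp: (wwt w x p) => [d|] //= [<-].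
have [c' Hc' Hc] := Hedge _ _ _ Hux.
rewrite mulnDr; apply: walk_le_cat (IH _ _ Hp).
exact: walk_le_mono Hc (walk_le_edge Hc').
Qed.

End Walks.

Section DoubledGraph.
Variables (V : finType) (E : rel V) (wG : V -> V -> nat).
Variables (C : {set V}) (dt : V -> V -> option nat) (s : V).
Let G := graph_of E wG.

Lemma dist_graph_of_edge x y : E x y -> oleq (dist G x y) (Some (wG x y)).
Proof. by move=> Exy; apply/dist_leP/walk_le_edge; rewrite /G /graph_of Exy. Qed.

Lemma graph_G'_edge_le x y c :
  G x y = Some c ->
  exists2 c', graph_G' E wG C dt s x y = Some c' & (c' <= 2 * c)%N.
Proof.
rewrite /G /graph_of /graph_G'; case: (E x y) => //; case=> <-.
case: andP => _; last by exists (2 * wG x y).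
case: (dist (graph_H C dt) x y) => [d|] /=; last by exists (2 * wG x y).
by exists (minn d (2 * wG x y)); rewrite ?geq_minr.
Qed.

Hypothesis dt_ge_dist : forall x, x \in C -> forall v, oleq (dist G x v) (dt x v).

Lemma dist_graph_H_ge x y : oleq (dist G x y) (dist (graph_H C dt) x y).
Proof.
apply: dist_le_of_edges => {}x {}y c; rewrite /graph_H.
by case: andP => // [[Cx _]] Hc; rewrite -Hc dt_ge_dist.
Qed.

Lemma graph_G'_edge_ge x y c :
  graph_G' E wG C dt s x y = Some c -> oleq (dist G x y) (Some c).
Proof.
have doubled_ge : E x y -> oleq (dist G x y) (Some (2 * wG x y)).
  by move=> Exy; apply: oleq_trans (dist_graph_of_edge Exy) _; rewrite /= leq_pmull.
have := dist_graph_H_ge x y; rewrite /graph_G'.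
case: andP => _; case Exy: (E x y) => //.
- case: (dist (graph_H C dt) x y) => [d|] distH_ge [<-]; last exact: doubled_ge.
  by case: (leqP d (2 * wG x y)) => _; [apply: distH_ge | apply: doubled_ge].
- by move=> distH_ge Hd; rewrite -Hd.
- by move=> _ [<-]; apply: doubled_ge.
Qed.

End DoubledGraph.

Theorem lemma3p2 (V : finType) (E : rel V) (wG : V -> V -> nat) (s : V)
  (h : nat) (C : {set V}) (dt : V -> V -> option nat) :
  (0 < h)%N -> (h <= #|V|)%N ->
  s \in C ->
  (* hitting property: whenever the shortest paths from u to v have (at
     minimum) exactly ceil(h/2) nodes, C contains a node of one of them *)
  (forall u v : V,
     (exists p, shortest_path (graph_of E wG) u v p /\ (size p).+1 = uphalf h) ->
     (forall p, shortest_path (graph_of E wG) u v p -> (uphalf h <= (size p).+1)%N) ->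
     exists p x, [/\ shortest_path (graph_of E wG) u v p, (size p).+1 = uphalf h,
                     x \in u :: p & x \in C]) ->
  (forall x, x \in C -> forall v : V,
     oleq (dist (graph_of E wG) x v) (dt x v) /\
     oleq (dt x v) (odbl (hdist (graph_of E wG) h x v))) ->
  forall v : V,
    oleq (dist (graph_of E wG) s v) (dist (graph_G' E wG C dt s) s v) /\
    oleq (dist (graph_G' E wG C dt s) s v) (odbl (dist (graph_of E wG) s v)).
Proof.
move=> _ _ _ _ Hdt v.
have dt_ge_dist x (Cx : x \in C) u := (Hdt x Cx u).1.
split; first exact/dist_le_of_edges/(graph_G'_edge_ge dt_ge_dist).
exact/dist_le_scale/graph_G'_edge_le.
Qed.
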